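(* Let $\mathcal T\in\Sigma^n$ be a text. Then $|\mathtt{st\text{-}pos}^-|$ is at most the number of escape symbols $\bot$ output by the following simple version of PPM$^*$ on $\mathcal T$: encode $\mathcal T[1]$ as $\bot\mathcal T[1]$; for $j=2,\dots,n$, let $i'$ be the minimum $i'\le j$ such that $\mathcal T[i',j-1]$ occurs in $\mathcal T[1,j-2]$; if $\mathcal T[i',j]$ occurs in $\mathcal T[1,j-1]$, encode $\mathcal T[j]$ according to the distribution of characters immediately following occurrences of $\mathcal T[i',j-1]$, otherwise encode $\mathcal T[j]$ as $\bot\mathcal T[j]$.
   Context: A text is a string $\mathcal T\in\Sigma^n$ over an integer alphabet whose last symbol $\mathcal T[n]=\$$ occurs only there and is smallest. For $i\ne j$, $\mathrm{rlce}(i,j)$ is the length of the longest common prefix of $\mathcal T[i,n]$ and $\mathcal T[j,n]$. $\mathrm{LPF}[i]=0$ if $i=1$, else $\mathrm{LPF}[i]=\max_{j<i}\mathrm{rlce}(j,i)$. $\mathtt{st\text{-}pos}^-$ is the set $\{i+\mathrm{LPF}[i]: i\in[n]\}$ (without duplicates), and $|\mathtt{st\text{-}pos}^-|$ its cardinality. The empty string $\mathcal T[j,j-1]$ is considered to occur in any string. *)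

(* Texts are 1-indexed: T[i] = tc T i for 1 <= i <= size T. *)
From mathcomp Require Import all_boot.
Set Implicit Arguments. Unset Strict Implicit. Unset Printing Implicit Defensive.

Definition tc (T : seq nat) (i : nat) : nat := nth 0 T i.-1.

(* A text: nonempty, and the last symbol T[n] is strictly smaller than every
   other symbol (hence occurs only at position n and is the smallest). *)
Definition is_text (T : seq nat) : bool :=
  (0 < size T) && all (fun i => tc T (size T) < tc T i) (iota 1 (size T).-1).

(* occ T a len d : the string T[a, a+len-1] occurs in T[1, d]
   (the empty string, len = 0, occurs in any string). *)
Definition occ (T : seq nat) (a len d : nat) : bool :=
  (len == 0) ||
  [exists p : 'I_d.+1, (1 <= p) && (p + len <= d.+1) &&
     [forall k : 'I_len, tc T (p + k) == tc T (a + k)]].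

(* rlce T i j : length of the longest common prefix of T[i,n] and T[j,n]. *)
Definition rlce (T : seq nat) (i j : nat) : nat :=
  \max_(l < (size T).+1 | (i + l <= (size T).+1) && (j + l <= (size T).+1) &&
                          [forall k : 'I_l, tc T (i + k) == tc T (j + k)]) l.

Definition LPF (T : seq nat) (i : nat) : nat :=
  if i == 1 then 0 else \max_(1 <= j < i) rlce T j i.

Definition st_pos_minus (T : seq nat) : seq nat :=
  undup [seq i + LPF T i | i <- iota 1 (size T)].

(* i' : minimum i' <= j such that T[i', j-1] occurs in T[1, j-2]
   (i' = j, the empty string, always qualifies). *)
Definition iprime (T : seq nat) (j : nat) : nat :=
  \big[minn/j]_(1 <= i < j | occ T i (j - i) (j - 2)) i.

Definition ppm_escape (T : seq nat) (j : nat) : bool :=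
  ~~ occ T (iprime T j) (j - iprime T j).+1 (j - 1).

Definition ppm_escapes (T : seq nat) : nat :=
  1 + count (ppm_escape T) (iota 2 (size T).-1).

From mathcomp Require Import all_boot order.
From mathcomp Require Import zify.

Set Implicit Arguments.
Unset Strict Implicit.
Unset Printing Implicit Defensive.

Import Order.TTheory.

(* Let v = i + LPF[i].  The factor T[i, v-1] already occurs at some q < i, so
   when PPM* reaches position v its context starts at some i' <= i.  If
   T[i', v] occurred in T[1, v-1], its suffix T[i, v] would occur before i,
   giving rlce(q', i) > LPF[i] for some q' < i.  Hence PPM* escapes at every
   v in st-pos^-, except v = 1 which is covered by the initial escape; and
   v <= n because the sentinel T[n] occurs only once. *)

Lemma eq_bigmax_seq_cond (I : eqType) (r : seq I) (P : pred I) (F : I -> nat) :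
  0 < \max_(x <- r | P x) F x ->
  exists2 x, x \in r & P x /\ F x = \max_(x <- r | P x) F x.
Proof.
elim: r => [|a r IHr]; first by rewrite big_nil.
rewrite big_cons; have [Pa|_] := boolP (P a); last first.
  by case/IHr => x xr Px; exists x; rewrite ?inE ?xr ?orbT.
have [_|_] := leqP (F a) (\max_(x <- r | P x) F x).
  by case/IHr => x xr Px; exists x; rewrite ?inE ?xr ?orbT.
by exists a; rewrite ?inE ?eqxx.
Qed.

Lemma leq_rlce T i j l : 0 < i ->
  i + l <= (size T).+1 -> j + l <= (size T).+1 ->
  (forall k, k < l -> tc T (i + k) = tc T (j + k)) -> l <= rlce T i j.
Proof.
move=> i_gt0 il jl eqTij; have ltl : l < (size T).+1 by lia.
apply: (@leq_bigmax_cond _ _ (fun l : 'I_(size T).+1 => val l) (Ordinal ltl)).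
by rewrite /= il jl; apply/forallP => k; apply/eqP/eqTij.
Qed.

Lemma rlce_leq_LPF T q i : 1 <= q < i -> rlce T q i <= LPF T i.
Proof.
move=> /andP[q_gt0 lt_qi]; rewrite /LPF ifN; last by apply/eqP; lia.
by rewrite big_nat_cond; apply: leq_bigmax_seq; rewrite ?mem_index_iota ?q_gt0 ?lt_qi.
Qed.

Lemma LPF_witness T i : 0 < LPF T i ->
  exists2 q, 1 <= q < i &
    i + LPF T i <= (size T).+1 /\
    forall k, k < LPF T i -> tc T (q + k) = tc T (i + k).
Proof.
rewrite /LPF; case: ifP => // _ LPF_gt0.
have [q] := eq_bigmax_seq_cond LPF_gt0.
rewrite mem_index_iota => q_range [_ rlce_q]; exists q => //.
rewrite -rlce_q in LPF_gt0 *.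
have [l _ [/andP[/andP[_ il] /forallP eqTqi] rlce_l]] := eq_bigmax_seq_cond LPF_gt0.
rewrite /rlce -rlce_l; split=> // k ltkl.
exact: (eqP (eqTqi (Ordinal ltkl))).
Qed.

Lemma text_last_neq T k :
  is_text T -> 1 <= k < size T -> tc T k != tc T (size T).
Proof.
case/andP=> _ /allP last_lt k_range.
by rewrite neq_ltn last_lt ?orbT // mem_iota; lia.
Qed.

Lemma LPF_text_bound T i :
  is_text T -> 1 <= i <= size T -> i + LPF T i <= size T.
Proof.
move=> textT i_range; have [->|/LPF_witness[q q_range [iL eqTqi]]] := posnP (LPF T i).
  by rewrite addn0; case/andP: i_range.
rewrite leqNgt; apply/negP => ltn_iL.
have lastL : i + (LPF T i).-1 = size T by lia.
have ltL : (LPF T i).-1 < LPF T i by lia.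
have := eqTqi _ ltL; rewrite lastL; apply/eqP.
by apply: text_last_neq; lia.
Qed.

Lemma occ_drop T a len d s : s <= len -> occ T a len d -> occ T (a + s) (len - s) d.
Proof.
move=> le_s_len; rewrite /occ subn_eq0; case/orP=> [/eqP len0|]; first by lia.
case/existsP=> p /andP[/andP[p_gt0 p_len] /forallP eqTpa].
have [//|lt_s_len] := leqP len s; apply/orP; right.
have ltps : p + s < d.+1 by lia.
apply/existsP; exists (Ordinal ltps); rewrite /=; apply/andP; split; first by lia.
apply/forallP => k; have ltsk : s + k < len by have := ltn_ord k; lia.
by rewrite -!addnA; apply: (eqTpa (Ordinal ltsk)).
Qed.

Lemma occ_LPF T i : occ T i (LPF T i) (i + LPF T i - 2).
Proof.
have [->|L_gt0] := posnP (LPF T i); first by rewrite /occ eqxx.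
have [q q_range [_ eqTqi]] := LPF_witness L_gt0.
apply/orP; right; have ltq : q < (i + LPF T i - 2).+1 by lia.
apply/existsP; exists (Ordinal ltq); rewrite /=; apply/andP; split; first by lia.
by apply/forallP => k; rewrite eqTqi.
Qed.

Lemma occ_leq_LPF T i l :
  i + l <= (size T).+1 -> occ T i l (i + l - 2) -> l <= LPF T i.
Proof.
move=> il; have [->//|l_gt0] := posnP l; case/orP=> [/eqP -> //|/existsP[p]].
case/andP=> [/andP[p_gt0 p_l] /forallP eqTpi].
have p_range : 1 <= p < i by lia.
apply: leq_trans (rlce_leq_LPF T p_range).
by apply: leq_rlce => [|||k ltkl]; [lia | lia | lia | apply/eqP/(eqTpi (Ordinal ltkl))].
Qed.

Lemma iprime_le T i j : 1 <= i <= j -> occ T i (j - i) (j - 2) -> iprime T j <= i.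
Proof.
case/andP=> i_gt0; rewrite leq_eqVlt => /orP[/eqP <- _|lt_ij occ_ij].
  exact: (bigmin_le_id (T:=nat)).
by apply: (ge_bigmin_seq (T:=nat) _ _ _ id); rewrite ?mem_index_iota ?i_gt0.
Qed.

Lemma ppm_escape_LPF T i :
  1 <= i -> i + LPF T i <= size T -> ppm_escape T (i + LPF T i).
Proof.
move=> i_gt0 iL; set v := i + LPF T i.
have le_i'i : iprime T v <= i.
  by apply: iprime_le; rewrite ?leq_addr ?i_gt0 // /v addKn occ_LPF.
apply/negP => occ_i'v.
have le_s : i - iprime T v <= (v - iprime T v).+1 by lia.
have := occ_drop le_s occ_i'v; rewrite subnKC //.
have -> : (v - iprime T v).+1 - (i - iprime T v) = (LPF T i).+1 by lia.
have -> : v - 1 = i + (LPF T i).+1 - 2 by lia.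
by move=> /occ_leq_LPF; rewrite ltnn addnS ltnS => /(_ iL).
Qed.

Theorem lemma48 (T : seq nat) :
  is_text T -> size (st_pos_minus T) <= ppm_escapes T.
Proof.
move=> textT; rewrite /ppm_escapes -size_filter -add1n.
apply: (uniq_leq_size (undup_uniq _) (_ : {subset _ <= 1 :: _})).
move=> x; rewrite mem_undup => /mapP[i]; rewrite mem_iota => i_range ->.
have iL := @LPF_text_bound T i textT (_ : 1 <= i <= size T).
rewrite inE mem_filter mem_iota ppm_escape_LPF ?iL; lia.
Qed.
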